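(* If $G$ is a $C$-group, then the profinite completion of $G$ is a profinite-$C$ group.
   Context: A permutable complement of a subgroup $H$ of a group $G$ is a subgroup $K$ with $G=HK$ and $H\cap K=1$. A group is a $C$-group if every subgroup has a permutable complement. A profinite group $G$ is a profinite-$C$ group if every closed subgroup of $G$ has a closed permutable complement in $G$. *)

(* abstract (possibly infinite) groups, given as a carrier with
   operations and axioms; the profinite completion is built concretely as the
   inverse limit of the finite quotients G/N, with elements represented as
   compatible families of cosets. *)
From Stdlib Require Import List.
Set Implicit Arguments.

(* An abstract group (left identity and left inverse axioms suffice). *)
Record group := Group {
  gcar :> Type;
  gmul : gcar -> gcar -> gcar;
  gone : gcar;
  ginv : gcar -> gcar;
  gmulA : forall x y z, gmul x (gmul y z) = gmul (gmul x y) z;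
  gmul1 : forall x, gmul gone x = x;
  gmulV : forall x, gmul (ginv x) x = gone
}.

Arguments gmul {g}.
Arguments gone {g}.
Arguments ginv {g}.

Section Discrete.
Context {G : group}.

Definition is_subgroup (S : G -> Prop) : Prop :=
  S gone /\ (forall x y, S x -> S y -> S (gmul x y)) /\
  (forall x, S x -> S (ginv x)).

Definition is_normal (S : G -> Prop) : Prop :=
  is_subgroup S /\ forall g x, S x -> S (gmul (gmul (ginv g) x) g).

Definition finite_index (S : G -> Prop) : Prop :=
  exists l : list G, forall x, exists g, In g l /\ S (gmul (ginv g) x).

Definition perm_complement (H K : G -> Prop) : Prop :=
  is_subgroup K /\
  (forall g, exists h k, H h /\ K k /\ g = gmul h k) /\
  (forall x, H x -> K x -> x = gone).

Definition C_group : Prop :=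
  forall H, is_subgroup H -> exists K, perm_complement H K.

End Discrete.

(* Normal subgroups of finite index: the index set of the inverse system. *)
Record fi_normal (G : group) := FiNormal {
  fiN :> G -> Prop;
  fiN_normal : is_normal fiN;
  fiN_index : finite_index fiN
}.

Section Completion.
Variable G : group.

(* a family assigning to each N a subset of G (intended: a coset of N) *)
Definition fam := fi_normal G -> G -> Prop.

Definition is_coset (N : G -> Prop) (C : G -> Prop) : Prop :=
  exists g, forall x, C x <-> N (gmul (ginv g) x).

Definition in_completion (f : fam) : Prop :=
  (forall N : fi_normal G, is_coset N (f N)) /\
  (forall M N : fi_normal G, (forall x, M x -> N x) ->
     forall x, f M x -> f N x).

(* group operations of the completion, computed coordinatewise in G/N
   (for normal N: (aN)(bN) = abN, (aN)^-1 = a^-1 N, identity N) *)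
Definition fam_mul (f g : fam) : fam :=
  fun N x => exists a b, f N a /\ g N b /\ x = gmul a b.
Definition fam_inv (f : fam) : fam := fun N x => f N (ginv x).
Definition fam_one : fam := fun N x => N x.

(* closedness for the profinite topology (product of discrete G/N restricted
   to the inverse limit): basic neighbourhoods of x are {y | y_N = x_N}. *)
Definition closed_in_completion (S : fam -> Prop) : Prop :=
  forall x, in_completion x -> ~ S x ->
    exists N : fi_normal G, forall y, in_completion y -> y N = x N -> ~ S y.

Definition closed_subgroup (S : fam -> Prop) : Prop :=
  (forall x, S x -> in_completion x) /\
  S fam_one /\
  (forall x y, S x -> S y -> S (fam_mul x y)) /\
  (forall x, S x -> S (fam_inv x)) /\
  closed_in_completion S.

Definition completion_is_profinite_C : Prop :=
  forall H, closed_subgroup H ->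
    exists K, closed_subgroup K /\
      (forall x, in_completion x -> exists h k, H h /\ K k /\ x = fam_mul h k) /\
      (forall x, H x -> K x -> x = fam_one).

End Completion.

(* The profinite completion is compact: a maximal family of sets with the finite
   intersection property contains, for every finite-index normal subgroup N, a
   basic set {y | y_N = gN}, and these cosets assemble into a point lying in all
   closed members of the family.
   Given a closed subgroup H, the intersection of a chain of closed supplements
   of H (closed subgroups K with HK = completion) is again one, by compactness; so
   Zorn's lemma yields a minimal closed supplement K.  If z is in H and K, fix N,
   let L be the subgroup of G of elements lying in some l_N with l in H and K, and
   let C be a permutable complement of L in G.  The elements of K whose
   N-coordinate meets C form a closed supplement inside K, hence all of K; so z_N
   meets C in an element of L, i.e. z_N = 1_N.  As N is arbitrary, z = 1. *)

From Stdlib Require Import List Classical FunctionalExtensionality PropExtensionality ClassicalEpsilon.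
From mathcomp Require classical_sets.

Arguments gmulA {g}.
Arguments gmul1 {g}.
Arguments gmulV {g}.
Arguments fam_one {G}.

Section GroupFacts.
Context {G : group}.
Implicit Types x y : G.

Lemma gmulgV x : gmul x (ginv x) = gone.
Proof.
assert (idem : gmul (gmul x (ginv x)) (gmul x (ginv x)) = gmul x (ginv x)).
{ rewrite <- gmulA, (gmulA (ginv x) x), gmulV, gmul1. reflexivity. }
set (e := gmul x (ginv x)) in *.
transitivity (gmul (gmul (ginv e) e) e); [rewrite gmulV, gmul1; reflexivity|].
rewrite <- gmulA, idem, gmulV. reflexivity.
Qed.

Lemma gmulg1 x : gmul x gone = x.
Proof. rewrite <- (gmulV x), gmulA, gmulgV, gmul1. reflexivity. Qed.

Lemma gmulKg x y : gmul (ginv x) (gmul x y) = y.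
Proof. rewrite gmulA, gmulV, gmul1. reflexivity. Qed.

Lemma gmulKVg x y : gmul x (gmul (ginv x) y) = y.
Proof. rewrite gmulA, gmulgV, gmul1. reflexivity. Qed.

Lemma ginvK x : ginv (ginv x) = x.
Proof.
rewrite <- (gmulg1 (ginv (ginv x))), <- (gmulV x), gmulA, gmulV, gmul1. reflexivity.
Qed.

Lemma ginvM x y : ginv (gmul x y) = gmul (ginv y) (ginv x).
Proof.
assert (E : gmul (gmul x y) (gmul (ginv y) (ginv x)) = gone).
{ rewrite <- gmulA, gmulKVg, gmulgV. reflexivity. }
rewrite <- (gmulg1 (ginv (gmul x y))), <- E, gmulA, gmulV, gmul1. reflexivity.
Qed.

Lemma ginv1 : ginv (@gone G) = gone.
Proof. rewrite <- (gmulg1 (ginv gone)), gmulV. reflexivity. Qed.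

End GroupFacts.

Section Cosets.
Context {G : group}.
Implicit Types (S N : G -> Prop) (a b c g x : G).

Lemma subgroup_invP S x : is_subgroup S -> S (ginv x) -> S x.
Proof. intros [_ [_ Sinv]] Sx. rewrite <- (ginvK x). exact (Sinv _ Sx). Qed.

Lemma subgroup_ldiv_sym S a b :
  is_subgroup S -> S (gmul (ginv a) b) -> S (gmul (ginv b) a).
Proof.
intros [_ [_ Sinv]] Sab. pose proof (Sinv _ Sab) as Sba. rewrite ginvM, ginvK in Sba. exact Sba.
Qed.

Lemma subgroup_ldiv_trans S a b c :
  is_subgroup S -> S (gmul (ginv a) b) -> S (gmul (ginv b) c) -> S (gmul (ginv a) c).
Proof.
intros [_ [Smul _]] Sab Sbc. pose proof (Smul _ _ Sab Sbc) as Sac.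
rewrite <- gmulA, gmulKVg in Sac. exact Sac.
Qed.

Lemma normal_conjV N g x : is_normal N -> N x -> N (gmul (gmul g x) (ginv g)).
Proof. intros [_ Nconj] Nx. pose proof (Nconj (ginv g) x Nx) as E. rewrite ginvK in E. exact E. Qed.

Lemma normal_mulC N a b : is_normal N -> N (gmul a b) -> N (gmul b a).
Proof.
intros Nn Nab. pose proof (normal_conjV N b _ Nn Nab) as E.
rewrite (gmulA b a b), <- gmulA, gmulgV, gmulg1 in E. exact E.
Qed.

Definition cos N a : G -> Prop := fun g => N (gmul (ginv a) g).

Lemma is_coset_cos N a : is_coset G N (cos N a).
Proof. exists a. intro x. reflexivity. Qed.

Lemma cos_refl N a : is_subgroup N -> cos N a a.
Proof. intros [N1 _]. unfold cos. rewrite gmulV. exact N1. Qed.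

Lemma cos_eq N a b : is_subgroup N -> cos N a b -> cos N a = cos N b.
Proof.
intros Ns Nab. apply functional_extensionality; intro g. apply propositional_extensionality.
unfold cos. split; intro Ng.
- apply (subgroup_ldiv_trans N _ a); [exact Ns|apply subgroup_ldiv_sym|]; assumption.
- apply (subgroup_ldiv_trans N _ b); assumption.
Qed.

Lemma cos1 N : cos N gone = N.
Proof.
apply functional_extensionality; intro g. unfold cos. rewrite ginv1, gmul1. reflexivity.
Qed.

Lemma cos_mul N a b : is_normal N ->
  (fun x => exists a' b', cos N a a' /\ cos N b b' /\ x = gmul a' b') = cos N (gmul a b).
Proof.
intros Nn. pose proof (proj1 Nn) as Ns.
apply functional_extensionality; intro g. apply propositional_extensionality. unfold cos. split.
- intros [a' [b' [Na' [Nb' ->]]]].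
  replace (gmul (ginv (gmul a b)) (gmul a' b'))
    with (gmul (gmul (gmul (ginv b) (gmul (ginv a) a')) (ginv (ginv b))) (gmul (ginv b) b')).
  + apply (proj1 (proj2 Ns)); [apply normal_conjV|]; assumption.
  + rewrite ginvK, ginvM, <- (gmulA _ b), gmulKVg, <- !gmulA. reflexivity.
- intros Ng. exists a, (gmul (ginv a) g). split; [exact (cos_refl N a Ns)|]. split.
  + rewrite ginvM, <- gmulA in Ng. exact Ng.
  + rewrite gmulKVg. reflexivity.
Qed.

Lemma cos_inv N a : is_normal N -> (fun x => cos N a (ginv x)) = cos N (ginv a).
Proof.
intros Nn. pose proof (proj1 Nn) as Ns.
apply functional_extensionality; intro g. apply propositional_extensionality. unfold cos.
rewrite ginvK.
assert (E : ginv (gmul (ginv a) (ginv g)) = gmul g a) by (rewrite ginvM, !ginvK; reflexivity).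
split; intro Ng.
- apply (normal_mulC N _ _ Nn). rewrite <- E. exact (proj2 (proj2 Ns) _ Ng).
- apply (subgroup_invP N _ Ns). rewrite E. exact (normal_mulC N _ _ Nn Ng).
Qed.

End Cosets.

Definition chain {T} (F : (T -> Prop) -> Prop) : Prop :=
  forall X Y, F X -> F Y -> (forall t, X t -> Y t) \/ (forall t, Y t -> X t).

Definition bigcap_in {T} (U : T -> Prop) (F : (T -> Prop) -> Prop) : T -> Prop :=
  fun t => U t /\ forall X, F X -> X t.

Lemma zorn_maximal {T} (P : (T -> Prop) -> Prop) :
  (forall F, (forall X, F X -> P X) -> chain F -> P (fun t => exists X, F X /\ X t)) ->
  exists A, P A /\ forall B, P B -> (forall t, A t -> B t) -> forall t, B t -> A t.
Proof.
intros Pchain. destruct (@classical_sets.Zorn_bigcup T P) as [A [PA Amax]].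
- intros F FP Fchain.
  replace (classical_sets.bigcup F (fun X => X)) with (fun t => exists X, F X /\ X t).
  + exact (Pchain F FP Fchain).
  + apply functional_extensionality; intro t. apply propositional_extensionality.
    split; [intros [X [FX Xt]]|intros [X FX Xt]]; exists X; auto.
- exists A. split; [exact PA|]. intros B PB AB t Bt. apply NNPP; intro nAt.
  apply (Amax B); [split; [exact AB|intro BA; exact (nAt (BA t Bt))]|exact PB].
Qed.

(* Minimal sets below U are maximal sets for their complements in U. *)
Lemma zorn_minimal {T} (U : T -> Prop) (P : (T -> Prop) -> Prop) :
  (forall A, P A -> forall t, A t -> U t) ->
  (forall F, (forall X, F X -> P X) -> chain F -> P (bigcap_in U F)) ->
  exists A, P A /\ forall B, P B -> (forall t, B t -> A t) -> forall t, A t -> B t.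
Proof.
intros PU Pchain.
set (co := fun (X : T -> Prop) t => U t /\ ~ X t).
assert (coN : forall B, P B -> co (fun t => ~ B t) = B).
{ intros B PB. apply functional_extensionality; intro t. apply propositional_extensionality.
  split; [intros [_ nnB]; exact (NNPP _ nnB)|intros Bt; split; [exact (PU B PB t Bt)|auto]]. }
destruct (zorn_maximal (fun X => P (co X))) as [Y [PY Ymax]].
- intros F FP Fchain.
  replace (co (fun t => exists X, F X /\ X t)) with (bigcap_in U (fun A => exists X, F X /\ A = co X)).
  + apply Pchain; [intros A [X [FX ->]]; exact (FP X FX)|].
    intros A B [X [FX ->]] [X' [FX' ->]].
    destruct (Fchain X X' FX FX') as [XX'|X'X]; [right|left]; intros t [Ut nt]; split; auto.
  + apply functional_extensionality; intro t. apply propositional_extensionality. split.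
    * intros [Ut Ht]. split; [exact Ut|]. intros [X [FX Xt]]. exact (proj2 (Ht (co X) (ex_intro _ X (conj FX eq_refl))) Xt).
    * intros [Ut nX]. split; [exact Ut|]. intros A [X [FX ->]]. split; [exact Ut|]. intro Xt. exact (nX (ex_intro _ X (conj FX Xt))).
- exists (co Y). split; [exact PY|]. intros B PB BY t [Ut nYt]. apply NNPP; intro nBt.
  apply nYt. apply (Ymax (fun t => ~ B t)); [rewrite coN; exact PB| |exact nBt].
  intros s Ys Bs. exact (proj2 (BY s Bs) Ys).
Qed.

Lemma chain_list_upper {T} (F : (T -> Prop) -> Prop) (Q : T -> Prop) X0 :
  chain F -> F X0 -> forall l, (forall t, In t l -> (exists X, F X /\ X t) \/ Q t) ->
  exists X, F X /\ forall t, In t l -> X t \/ Q t.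
Proof.
intros Fchain FX0. induction l as [|t l IH]; intros Hl.
- exists X0. split; [exact FX0|]. intros t [].
- destruct IH as [X [FX HX]]; [intros s Hs; apply Hl; right; exact Hs|].
  destruct (Hl t (or_introl eq_refl)) as [[Y [FY Yt]]|Qt].
  + destruct (Fchain X Y FX FY) as [XY|YX].
    * exists Y. split; [exact FY|]. intros s [<-|Hs]; [left; exact Yt|].
      destruct (HX s Hs); [left; apply XY|right]; assumption.
    * exists X. split; [exact FX|]. intros s [<-|Hs]; [left; exact (YX t Yt)|exact (HX s Hs)].
  + exists X. split; [exact FX|]. intros s [<-|Hs]; [right; exact Qt|exact (HX s Hs)].
Qed.

Lemma directed_list_lower {T} (S : (T -> Prop) -> Prop) A0 : S A0 ->
  (forall A B, S A -> S B -> exists C, S C /\ forall t, C t -> A t /\ B t) ->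
  forall l, (forall A, In A l -> S A) -> exists C, S C /\ forall A, In A l -> forall t, C t -> A t.
Proof.
intros SA0 Sdir. induction l as [|A l IH]; intros Hl.
- exists A0. split; [exact SA0|]. intros A [].
- destruct IH as [C [SC HC]]; [intros B HB; apply Hl; right; exact HB|].
  destruct (Sdir A C (Hl A (or_introl eq_refl)) SC) as [D [SD HD]].
  exists D. split; [exact SD|]. intros B [<-|HB] t Dt; [exact (proj1 (HD t Dt))|].
  exact (HC B HB t (proj2 (HD t Dt))).
Qed.

Lemma list_split_value {T} (P : T -> Prop) v l' : (forall a, In a l' -> P a \/ a = v) ->
  exists l, (forall a, In a l -> P a) /\ forall a, In a l' -> In a l \/ a = v.
Proof.
induction l' as [|b l' IH]; intros Hl'.
- exists nil. split; intros a [].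
- destruct IH as [l [Pl Hl]]; [intros a Ha; apply Hl'; right; exact Ha|].
  destruct (Hl' b (or_introl eq_refl)) as [Pb| ->].
  + exists (b :: l). split; [intros a [<-|Ha]; auto|].
    intros a [<-|Ha]; [left; left; reflexivity|]. destruct (Hl a Ha); [left; right|right]; assumption.
  + exists l. split; [exact Pl|]. intros a [<-|Ha]; [right; reflexivity|exact (Hl a Ha)].
Qed.

Section Completion.
Context {G : group}.
Implicit Types (N M : fi_normal G) (a b c : G) (x y z h k l : fam G).

Lemma fi_normal_subgroup N : is_subgroup N.
Proof. exact (proj1 (fiN_normal N)). Qed.

Lemma fam_ext x y : (forall N, x N = y N) -> x = y.
Proof. apply functional_extensionality. Qed.

Lemma in_completion_cos x N : in_completion x -> exists a, x N = cos N a.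
Proof.
intros [Hcos _]. destruct (Hcos N) as [a Ha]. exists a.
apply functional_extensionality; intro g. apply propositional_extensionality. apply Ha.
Qed.

Lemma in_completion_cos_mem x N c : in_completion x -> x N c -> x N = cos N c.
Proof.
intros Hx xNc. destruct (in_completion_cos x N Hx) as [a Ha]. rewrite Ha in *.
exact (cos_eq N a c (fi_normal_subgroup N) xNc).
Qed.

Lemma fam_mul_cos x y N a b :
  x N = cos N a -> y N = cos N b -> fam_mul x y N = cos N (gmul a b).
Proof. intros Ha Hb. unfold fam_mul. rewrite Ha, Hb. exact (cos_mul N a b (fiN_normal N)). Qed.

Lemma fam_inv_cos x N a : x N = cos N a -> fam_inv x N = cos N (ginv a).
Proof. intros Ha. unfold fam_inv. rewrite Ha. exact (cos_inv N a (fiN_normal N)). Qed.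

Lemma fam_one_cos N : fam_one N = cos N gone.
Proof. rewrite cos1. reflexivity. Qed.

Lemma in_completion_mul x y : in_completion x -> in_completion y -> in_completion (fam_mul x y).
Proof.
intros Hx Hy. split.
- intro N. destruct (in_completion_cos x N Hx) as [a Ha]. destruct (in_completion_cos y N Hy) as [b Hb].
  rewrite (fam_mul_cos x y N a b Ha Hb). apply is_coset_cos.
- intros M N MN g [a [b [xa [yb ->]]]]. exists a, b.
  split; [exact (proj2 Hx M N MN a xa)|]. split; [exact (proj2 Hy M N MN b yb)|reflexivity].
Qed.

Lemma in_completion_inv x : in_completion x -> in_completion (fam_inv x).
Proof.
intros Hx. split.
- intro N. destruct (in_completion_cos x N Hx) as [a Ha].
  rewrite (fam_inv_cos x N a Ha). apply is_coset_cos.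
- intros M N MN g. exact (proj2 Hx M N MN (ginv g)).
Qed.

Lemma in_completion_one : in_completion (@fam_one G).
Proof.
split.
- intro N. exists gone. intro g. rewrite ginv1, gmul1. reflexivity.
- intros M N MN. exact MN.
Qed.

Lemma fam_mul1 x : in_completion x -> fam_mul fam_one x = x.
Proof.
intros Hx. apply fam_ext; intro N. destruct (in_completion_cos x N Hx) as [a Ha].
rewrite (fam_mul_cos _ _ N _ _ (fam_one_cos N) Ha), gmul1. symmetry. exact Ha.
Qed.

Lemma fam_mulKg y x : in_completion y -> in_completion x ->
  fam_mul (fam_inv y) (fam_mul y x) = x.
Proof.
intros Hy Hx. apply fam_ext; intro N.
destruct (in_completion_cos y N Hy) as [b Hb]. destruct (in_completion_cos x N Hx) as [a Ha].
rewrite (fam_mul_cos _ _ N _ _ (fam_inv_cos y N b Hb) (fam_mul_cos y x N b a Hb Ha)), gmulKg.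
symmetry. exact Ha.
Qed.

Lemma fam_mulKVg y x : in_completion y -> in_completion x ->
  fam_mul y (fam_mul (fam_inv y) x) = x.
Proof.
intros Hy Hx. apply fam_ext; intro N.
destruct (in_completion_cos y N Hy) as [b Hb]. destruct (in_completion_cos x N Hx) as [a Ha].
rewrite (fam_mul_cos _ _ N _ _ Hb (fam_mul_cos _ x N _ a (fam_inv_cos y N b Hb) Ha)), gmulKVg.
symmetry. exact Ha.
Qed.

Lemma fam_mul_mid_cancel h l k : in_completion h -> in_completion l -> in_completion k ->
  fam_mul (fam_mul h l) (fam_mul (fam_inv l) k) = fam_mul h k.
Proof.
intros Hh Hl Hk. apply fam_ext; intro N.
destruct (in_completion_cos h N Hh) as [a Ha]. destruct (in_completion_cos l N Hl) as [b Hb].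
destruct (in_completion_cos k N Hk) as [c Hc].
rewrite (fam_mul_cos _ _ N _ _ (fam_mul_cos h l N a b Ha Hb)
           (fam_mul_cos _ k N _ c (fam_inv_cos l N b Hb) Hc)).
rewrite (fam_mul_cos h k N a c Ha Hc), <- gmulA, gmulKVg. reflexivity.
Qed.

Lemma closed_in_completion_and (A B : fam G -> Prop) :
  closed_in_completion A -> closed_in_completion B -> closed_in_completion (fun y => A y /\ B y).
Proof.
intros Acl Bcl x Hx nAB. destruct (classic (A x)) as [Ax|nA].
- destruct (Bcl x Hx (fun Bx => nAB (conj Ax Bx))) as [N HN].
  exists N. intros y Hy E [_ By]. exact (HN y Hy E By).
- destruct (Acl x Hx nA) as [N HN]. exists N. intros y Hy E [Ay _]. exact (HN y Hy E Ay).
Qed.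

Lemma closed_in_completion_ldiv x (K : fam G -> Prop) : in_completion x ->
  closed_in_completion K -> closed_in_completion (fun y => K (fam_mul (fam_inv y) x)).
Proof.
intros Hx Kcl y Hy nK.
destruct (Kcl _ (in_completion_mul _ _ (in_completion_inv y Hy) Hx) nK) as [N HN].
exists N. intros y' Hy' E. apply HN; [exact (in_completion_mul _ _ (in_completion_inv y' Hy') Hx)|].
unfold fam_mul, fam_inv. rewrite E. reflexivity.
Qed.

Lemma closed_subgroup_bigcap (F : (fam G -> Prop) -> Prop) :
  (forall X, F X -> closed_subgroup X) -> closed_subgroup (bigcap_in (@in_completion G) F).
Proof.
intros FS. split; [|split; [|split; [|split]]].
- intros x [Hx _]. exact Hx.
- split; [exact in_completion_one|]. intros X FX. exact (proj1 (proj2 (FS X FX))).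
- intros x y [Hx Fx] [Hy Fy]. split; [exact (in_completion_mul x y Hx Hy)|].
  intros X FX. exact (proj1 (proj2 (proj2 (FS X FX))) x y (Fx X FX) (Fy X FX)).
- intros x [Hx Fx]. split; [exact (in_completion_inv x Hx)|].
  intros X FX. exact (proj1 (proj2 (proj2 (proj2 (FS X FX)))) x (Fx X FX)).
- intros x Hx nF.
  destruct (not_all_ex_not _ _ (fun Fx => nF (conj Hx Fx))) as [X nX].
  destruct (imply_to_and _ _ nX) as [FX nXx].
  destruct (proj2 (proj2 (proj2 (proj2 (FS X FX)))) x Hx nXx) as [N HN].
  exists N. intros y Hy E [_ Fy]. exact (HN y Hy E (Fy X FX)).
Qed.

Definition proj_set (S : fam G -> Prop) N : G -> Prop := fun a => exists l, S l /\ l N a.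

Lemma proj_set_subgroup (S : fam G -> Prop) N : S fam_one ->
  (forall x y, S x -> S y -> S (fam_mul x y)) -> (forall x, S x -> S (fam_inv x)) ->
  is_subgroup (proj_set S N).
Proof.
intros S1 Smul Sinv. split; [|split].
- exists fam_one. split; [exact S1|exact (proj1 (fi_normal_subgroup N))].
- intros a b [x [Sx xa]] [y [Sy yb]]. exists (fam_mul x y).
  split; [exact (Smul x y Sx Sy)|]. exists a, b. auto.
- intros a [x [Sx xa]]. exists (fam_inv x). split; [exact (Sinv x Sx)|].
  unfold fam_inv. rewrite ginvK. exact xa.
Qed.

Definition restrict_coord (K : fam G -> Prop) N (C : G -> Prop) : fam G -> Prop :=
  fun k => K k /\ exists c, C c /\ k N c.

Lemma closed_subgroup_restrict K N (C : G -> Prop) : closed_subgroup K -> is_subgroup C ->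
  closed_subgroup (restrict_coord K N C).
Proof.
intros [Ksub [K1 [Kmul [Kinv Kcl]]]] [C1 [Cmul Cinv]]. split; [|split; [|split; [|split]]].
- intros x [Kx _]. exact (Ksub x Kx).
- split; [exact K1|]. exists gone. split; [exact C1|exact (proj1 (fi_normal_subgroup N))].
- intros x y [Kx [a [Ca xa]]] [Ky [b [Cb yb]]]. split; [exact (Kmul x y Kx Ky)|].
  exists (gmul a b). split; [exact (Cmul a b Ca Cb)|]. exists a, b. auto.
- intros x [Kx [a [Ca xa]]]. split; [exact (Kinv x Kx)|].
  exists (ginv a). split; [exact (Cinv a Ca)|]. unfold fam_inv. rewrite ginvK. exact xa.
- intros x Hx nX. destruct (classic (K x)) as [Kx|nKx].
  + exists N. intros y Hy E [_ [c [Cc yc]]]. apply nX. split; [exact Kx|].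
    exists c. split; [exact Cc|]. rewrite <- E. exact yc.
  + destruct (Kcl x Hx nKx) as [N' HN']. exists N'. intros y Hy E [Ky _]. exact (HN' y Hy E Ky).
Qed.

End Completion.

Section Compactness.
Context {G : group}.

Definition fip (S : (fam G -> Prop) -> Prop) : Prop :=
  forall l, (forall A, In A l -> S A) -> exists y, in_completion y /\ forall A, In A l -> A y.

Lemma fip_sub (S T : (fam G -> Prop) -> Prop) : (forall A, S A -> T A) -> fip T -> fip S.
Proof. intros ST Tfip l Sl. apply Tfip. intros A HA. exact (ST A (Sl A HA)). Qed.

Lemma fip_maximal_extension S : fip S ->
  exists U, (forall A, S A -> U A) /\ fip U /\ forall V, fip (fun B => U B \/ B = V) -> U V.
Proof.
intros Sfip.
destruct (zorn_maximal (fun U => fip (fun B => U B \/ S B))) as [U [Ufip Umax]].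
- intros F Ffip Fchain l Hl. destruct (classic (exists X, F X)) as [[X0 FX0]|nF].
  + destruct (chain_list_upper F S X0 Fchain FX0 l Hl) as [X [FX HX]]. exact (Ffip X FX l HX).
  + apply Sfip. intros A HA. destruct (Hl A HA) as [[X [FX _]]|SA]; [|exact SA].
    destruct (nF (ex_intro _ X FX)).
- exists (fun B => U B \/ S B). split; [auto|]. split; [exact Ufip|].
  intros V HV. left. apply (Umax (fun B => U B \/ B = V)); [| |right; reflexivity].
  + revert HV. apply fip_sub. intros B [[UB|BV]|SB]; auto.
  + intros B UB. left. exact UB.
Qed.

Section MaximalFip.
Variable U : (fam G -> Prop) -> Prop.
Hypothesis U_fip : fip U.
Hypothesis U_max : forall V, fip (fun B => U B \/ B = V) -> U V.

Lemma max_fip_avoid V : ~ U V -> exists l, (forall A, In A l -> U A) /\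
  forall y, in_completion y -> (forall A, In A l -> A y) -> ~ V y.
Proof.
intros nV. apply NNPP; intro Hn. apply nV, U_max. intros l' Hl'.
destruct (list_split_value U V l' Hl') as [l [Ul Hl]].
apply NNPP; intro Hno. apply Hn. exists l. split; [exact Ul|].
intros y Hy ly Vy. apply Hno. exists y. split; [exact Hy|].
intros A HA. destruct (Hl A HA) as [HA'| ->]; [exact (ly A HA')|exact Vy].
Qed.

(* G/N is finite, so the basic sets {y | y_N = gN} cover the completion with finitely many members. *)
Lemma max_fip_coset (N : fi_normal G) : exists g, U (fun y => y N g).
Proof.
apply NNPP; intro Hn.
assert (avoid : forall g, exists l, (forall A, In A l -> U A) /\
          forall y, in_completion y -> (forall A, In A l -> A y) -> ~ y N g).
{ intro g. apply max_fip_avoid. intro Ug. exact (Hn (ex_intro _ g Ug)). }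
destruct (choice _ avoid) as [lg Hlg].
destruct (fiN_index N) as [L HL].
destruct (U_fip (flat_map lg L)) as [y [Hy yl]].
{ intros A HA. apply in_flat_map in HA. destruct HA as [g [_ HA]]. exact (proj1 (Hlg g) A HA). }
destruct (in_completion_cos y N Hy) as [a Ha]. destruct (HL a) as [g [Lg Ng]].
apply (proj2 (Hlg g) y Hy).
- intros A HA. apply yl, in_flat_map. exists g. split; assumption.
- rewrite Ha. exact (subgroup_ldiv_sym N g a (fi_normal_subgroup N) Ng).
Qed.

Lemma max_fip_meet2 A B : U A -> U B -> exists y, in_completion y /\ A y /\ B y.
Proof.
intros UA UB. destruct (U_fip (A :: B :: nil)) as [y [Hy yAB]].
- intros C [<-|[<-|[]]]; assumption.
- exists y. split; [exact Hy|]. split; apply yAB; simpl; auto.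
Qed.

Lemma max_fip_limit : exists x, in_completion x /\
  forall A, U A -> closed_in_completion A -> A x.
Proof.
destruct (choice _ max_fip_coset) as [r Hr].
set (x := fun N : fi_normal G => cos N (r N)).
assert (xN : forall y N, in_completion y -> y N (r N) -> y N = x N).
{ intros y N Hy yr. exact (in_completion_cos_mem y N (r N) Hy yr). }
assert (Hx : in_completion x).
{ split; [intro N; apply is_coset_cos|].
  intros M N MN g Mg. destruct (max_fip_meet2 _ _ (Hr M) (Hr N)) as [y [Hy [yM yN]]].
  rewrite <- (xN y N Hy yN). apply (proj2 Hy M N MN). rewrite (xN y M Hy yM). exact Mg. }
exists x. split; [exact Hx|]. intros A UA Acl. apply NNPP; intro nA.
destruct (Acl x Hx nA) as [N HN].
destruct (max_fip_meet2 _ _ UA (Hr N)) as [y [Hy [Ay yN]]].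
exact (HN y Hy (xN y N Hy yN) Ay).
Qed.

End MaximalFip.

Theorem completion_compact (S : (fam G -> Prop) -> Prop) : (forall A, S A -> closed_in_completion A) -> fip S ->
  exists x, in_completion x /\ forall A, S A -> A x.
Proof.
intros Scl Sfip. destruct (fip_maximal_extension S Sfip) as [U [SU [Ufip Umax]]].
destruct (max_fip_limit U Ufip Umax) as [x [Hx xU]].
exists x. split; [exact Hx|]. intros A SA. exact (xU A (SU A SA) (Scl A SA)).
Qed.

Corollary completion_compact_directed (S : (fam G -> Prop) -> Prop) A0 : S A0 ->
  (forall A, S A -> closed_in_completion A) ->
  (forall A, S A -> exists y, in_completion y /\ A y) ->
  (forall A B, S A -> S B -> exists C, S C /\ forall t, C t -> A t /\ B t) ->
  exists x, in_completion x /\ forall A, S A -> A x.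
Proof.
intros SA0 Scl Sne Sdir. apply (completion_compact S Scl). intros l Sl.
destruct (directed_list_lower S A0 SA0 Sdir l Sl) as [C [SC HC]].
destruct (Sne C SC) as [y [Hy Cy]]. exists y. split; [exact Hy|].
intros A HA. exact (HC A HA y Cy).
Qed.

End Compactness.

Section Supplements.
Context {G : group}.
Variable H : fam G -> Prop.
Hypothesis H_closed : closed_subgroup H.

Definition supplement (K : fam G -> Prop) : Prop :=
  closed_subgroup K /\ forall x, in_completion x -> exists h k, H h /\ K k /\ x = fam_mul h k.

Lemma supplement_bigcap F : (forall K, F K -> supplement K) -> chain F ->
  supplement (bigcap_in (@in_completion G) F).
Proof.
intros Fsup Fchain. split; [apply closed_subgroup_bigcap; intros K FK; exact (proj1 (Fsup K FK))|].
destruct H_closed as [Hsub [H1 [_ [_ Hcl]]]].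
intros x Hx. destruct (classic (exists K, F K)) as [[K0 FK0]|nF].
2:{ exists fam_one, x. split; [exact H1|]. split; [|symmetry; exact (fam_mul1 x Hx)].
    split; [exact Hx|]. intros K FK. destruct (nF (ex_intro _ K FK)). }
set (ldiv K y := H y /\ K (fam_mul (fam_inv y) x)).
destruct (completion_compact_directed (fun A => exists K, F K /\ A = ldiv K) (ldiv K0))
  as [y [Hy yF]].
- exists K0. split; [exact FK0|reflexivity].
- intros A [K [FK ->]]. apply (closed_in_completion_and _ _ Hcl).
  exact (closed_in_completion_ldiv x K Hx (proj2 (proj2 (proj2 (proj2 (proj1 (Fsup K FK))))))).
- intros A [K [FK ->]]. destruct (Fsup K FK) as [[Ksub _] Kdec].
  destruct (Kdec x Hx) as [h [k [Hh [Kk ->]]]]. exists h.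
  split; [exact (Hsub h Hh)|]. split; [exact Hh|].
  rewrite (fam_mulKg h k (Hsub h Hh) (Ksub k Kk)). exact Kk.
- intros A B [K [FK ->]] [K' [FK' ->]].
  destruct (Fchain K K' FK FK') as [KK'|K'K].
  + exists (ldiv K). split; [exists K; split; [exact FK|reflexivity]|].
    intros t [Ht Kt]. split; split; auto.
  + exists (ldiv K'). split; [exists K'; split; [exact FK'|reflexivity]|].
    intros t [Ht Kt]. split; split; auto.
- exists y, (fam_mul (fam_inv y) x). split; [exact (proj1 (yF (ldiv K0) (ex_intro _ K0 (conj FK0 eq_refl))))|].
  split; [|symmetry; exact (fam_mulKVg y x Hy Hx)].
  split; [exact (in_completion_mul _ _ (in_completion_inv y Hy) Hx)|].
  intros K FK. exact (proj2 (yF (ldiv K) (ex_intro _ K (conj FK eq_refl)))).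
Qed.

Lemma minimal_supplement_exists : exists K, supplement K /\
  forall X, supplement X -> (forall t, X t -> K t) -> forall t, K t -> X t.
Proof.
apply (zorn_minimal (@in_completion G)); [|exact supplement_bigcap].
intros K [[Ksub _] _]. exact Ksub.
Qed.

Lemma supplement_restrict K N (C : G -> Prop) : supplement K -> is_subgroup C ->
  (forall a, exists l c, proj_set (fun t => H t /\ K t) N l /\ C c /\ a = gmul l c) ->
  supplement (restrict_coord K N C).
Proof.
intros [KS Kdec] Cs LC. split; [exact (closed_subgroup_restrict K N C KS Cs)|].
destruct H_closed as [Hsub [_ [Hmul _]]]. destruct KS as [Ksub [_ [Kmul [Kinv _]]]].
intros x Hx. destruct (Kdec x Hx) as [h [k [Hh [Kk ->]]]].
destruct (in_completion_cos k N (Ksub k Kk)) as [a Ha].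
destruct (LC a) as [l [c [[m [[Hm Km] ml]] [Cc ->]]]].
exists (fam_mul h m), (fam_mul (fam_inv m) k). split; [exact (Hmul h m Hh Hm)|]. split.
- split; [exact (Kmul _ k (Kinv m Km) Kk)|]. exists c. split; [exact Cc|].
  exists (ginv l), (gmul l c). split; [unfold fam_inv; rewrite ginvK; exact ml|].
  split; [rewrite Ha; exact (cos_refl N _ (fi_normal_subgroup N))|symmetry; apply gmulKg].
- symmetry. exact (fam_mul_mid_cancel h m k (Hsub h Hh) (Hsub m Hm) (Ksub k Kk)).
Qed.

Lemma minimal_supplement_meet1 K : @C_group G -> supplement K ->
  (forall X, supplement X -> (forall t, X t -> K t) -> forall t, K t -> X t) ->
  forall z, H z -> K z -> z = fam_one.
Proof.
intros HC Ksup Kmin z Hz Kz. apply fam_ext; intro N.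
destruct H_closed as [Hsub [H1 [Hmul [Hinv _]]]].
pose proof Ksup as [[_ [K1 [Kmul [Kinv _]]]] _].
destruct (HC (proj_set (fun t => H t /\ K t) N)) as [C [Cs [LC LC1]]].
{ apply proj_set_subgroup; [split; assumption| |].
  - intros x y [Hx Kx] [Hy Ky]. split; [exact (Hmul x y Hx Hy)|exact (Kmul x y Kx Ky)].
  - intros x [Hx Kx]. split; [exact (Hinv x Hx)|exact (Kinv x Kx)]. }
destruct (Kmin _ (supplement_restrict K N C Ksup Cs LC) (fun t Xt => proj1 Xt) z Kz)
  as [_ [c [Cc zc]]].
assert (c1 : c = gone) by (apply LC1; [exists z; split; [split|]|]; assumption).
rewrite (in_completion_cos_mem z N c (Hsub z Hz) zc), c1, cos1. reflexivity.
Qed.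

End Supplements.

Theorem corollary2p5 (G : group) :
  @C_group G -> completion_is_profinite_C G.
Proof.
intros HC H Hcl.
destruct (minimal_supplement_exists H Hcl) as [K [[KS Kdec] Kmin]].
exists K. split; [exact KS|]. split; [exact Kdec|].
exact (minimal_supplement_meet1 H Hcl K HC (conj KS Kdec) Kmin).
Qed.
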